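(* Let $N_T\geq 1$ be an integer, let $m=2(N_T+2)$ and $n=N_T+2+m$. Let $\tilde A_0,\tilde A_1,\dots,\tilde A_{N_T},\tilde\gamma_0,\tilde\gamma_1,\dots,\tilde\gamma_{N_T+1}$ be arbitrary real numbers and let $r\in\mathbb{R}$, $r\neq 0$. Then there exist $\gamma>0$ and a unitary $n\times n$ complex matrix $M=(M_{i,j})_{i,j=0}^{n-1}$ of the following form: with $A_j:=\gamma\tilde A_j$ ($0\le j\le N_T$) and $\gamma_i:=\gamma\tilde\gamma_i$ ($0\le i\le N_T+1$), - $M_{0,j}=A_j$ for $0\le j\le N_T$; - for $0\le k\le N_T$ and $0\le j\le N_T$: $M_{k+1,j}=0$ if $j=k$, and $M_{k+1,j}=-r\,A_j$ if $j\neq k$; - $M_{i,N_T+1}=\gamma_i$ for $0\le i\le N_T+1$; - all remaining entries (those with $i\geq N_T+2$ or $j\geq N_T+2$) are unconstrained complex numbers.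
   Context: Interpretation: rows/columns $0,1,\dots,N_T+1$ correspond to the basis states $|E\rangle,|\tau_0\rangle,\dots,|\tau_{N_T}\rangle$ of a clock and the last $m$ indices to stationary ancilla states $|A_1\rangle,\dots,|A_m\rangle$; the prescribed entries encode the conditions that the outcomes corresponding to $A_0,\dots,A_{N_T}$ are counterfactual outcomes, with $r=\cos\theta/\sin\theta$ and probabilities $|\cos\theta\, A_l|^2$. The proposition asserts existence of such a counterfactual clock with $m=2(N_T+2)$ ancillas for arbitrarily many distinguishable times. *)

From HB Require Import structures.
From mathcomp Require Import all_boot all_order all_algebra.
From mathcomp Require Export spectral.
From mathcomp Require Export complex.
From mathcomp Require Export reals.
Set Implicit Arguments. Unset Strict Implicit. Unset Printing Implicit Defensive.
Import Order.TTheory GRing.Theory Num.Theory.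
Local Open Scope ring_scope.

Definition clock_dim (NT : nat) : nat := (NT + 2 + 2 * (NT + 2))%N.

From HB Require Import structures.
From mathcomp Require Import all_boot all_order all_algebra.
From mathcomp Require Import spectral complex reals.
From mathcomp Require Import zify.

Set Implicit Arguments.
Unset Strict Implicit.
Unset Printing Implicit Defensive.
Import Order.TTheory GRing.Theory Num.Theory.
Local Open Scope ring_scope.
Local Open Scope complex_scope.

(* The prescribed entries form the top-left k x k block (k = N_T+2) of M, equal
   to gamma B for a fixed real matrix B.  Writing B B^* = P^* diag(e) P with P
   unitary and e >= 0, any gamma > 0 with gamma^2 e_i <= 1 makes gamma B a
   contraction, and D := P^* diag(sqrt(1 - gamma^2 e_i)) satisfies
   (gamma B)(gamma B)^* + D D^* = 1.  The rows of [gamma B  D] are therefore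
   orthonormal; padded with zeros and completed by Gram-Schmidt on their
   orthogonal complement, they become the first k rows of a unitary matrix of
   any size n >= 2k. *)

Section UnitaryCompletion.
Local Open Scope sesquilinear_scope.
Variable C : numClosedFieldType.

Lemma castmx_unitarymx m n m' n' (e : (m = m') * (n = n')) (V : 'M[C]_(m, n)) :
  V \is unitarymx -> castmx e V \is unitarymx.
Proof. by case: e => em en; case: m' / em; case: n' / en; rewrite castmx_id. Qed.

Lemma row_mx_unitarymx k p q (A : 'M[C]_(k, p)) (B : 'M[C]_(k, q)) :
  A *m A^t* + B *m B^t* = 1%:M -> row_mx A B \is unitarymx.
Proof. by move=> AB; apply/unitarymxP; rewrite tr_row_mx map_col_mx mul_row_col. Qed.

Lemma col_mx_unitarymx k l n (V : 'M[C]_(k, n)) (W : 'M[C]_(l, n)) :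
  V \is unitarymx -> W \is unitarymx -> V *m W^t* = 0 ->
  col_mx V W \is unitarymx.
Proof.
move=> Vu Wu VW; apply/unitarymxP.
rewrite tr_col_mx map_row_mx mul_col_row !(unitarymxP _) // VW.
have -> : W *m V^t* = 0 by rewrite -[W]trmxCK -map_mxM -trmx_mul VW trmx0 map_mx0.
by rewrite -scalar_mx_block.
Qed.

Lemma unitarymx_complete_rows k n (V : 'M[C]_(k, n)) : V \is unitarymx ->
  exists2 M : 'M[C]_n, M \is unitarymx &
    forall (i j : 'I_n) (i' : 'I_k), i = i' :> nat -> M i j = V i' j.
Proof.
move=> Vu.
pose O := orthomx Num.conj (mx_of_hermitian (hermitian1mx _)) V.
pose W := schmidt (row_base O).
have Wu : W \is unitarymx by apply: schmidt_unitarymx; rewrite rank_leq_col.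
have VW : V *m W^t* = 0.
  apply/orthomx1P; rewrite orthomx_sym eqmx_schmidt_free ?row_base_free //.
  by rewrite eq_row_base submx_refl.
have dimE : (k + \rank O)%N = n by rewrite -{1}(mxrank_unitary Vu) add_rank_ortho.
exists (castmx (dimE, erefl) (col_mx V W)).
  by apply: castmx_unitarymx; apply: col_mx_unitarymx.
move=> i j i' ii'; rewrite castmxE /=.
have -> : cast_ord (esym dimE) i = lshift _ i' by apply: val_inj.
by rewrite cast_ord_id col_mxEu.
Qed.

Lemma unitarymx_corner k p n (V : 'M[C]_(k, p)) : V \is unitarymx -> (p <= n)%N ->
  exists2 M : 'M[C]_n, M \is unitarymx &
    forall (i j : 'I_n) (i' : 'I_k) (j' : 'I_p),
      i = i' :> nat -> j = j' :> nat -> M i j = V i' j'.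
Proof.
move=> Vu le_pn; have dimE := subnKC le_pn.
have Vpad : castmx (erefl k, dimE) (row_mx V 0) \is unitarymx.
  by apply/castmx_unitarymx/row_mx_unitarymx; rewrite (unitarymxP Vu) mul0mx addr0.
have [M Mu MV] := unitarymx_complete_rows Vpad.
exists M => // i j i' j' ii' jj'; rewrite (MV i j i') // castmxE cast_ord_id /=.
have -> : cast_ord (esym dimE) j = lshift _ j' by apply: val_inj.
by rewrite row_mxEl.
Qed.

End UnitaryCompletion.

Section UnitaryDilation.
Local Open Scope sesquilinear_scope.
Variable C : numClosedFieldType.

Lemma gram_spectral k p (B : 'M[C]_(k, p)) :
  exists P (e : 'rV[C]_k), [/\ P \is unitarymx,
    B *m B^t* = P^t* *m diag_mx e *m P & forall i, 0 <= e 0 i].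
Proof.
pose G := B *m B^t*.
have G_normal : G \is normalmx.
  by apply/normalmxP; rewrite /G trmx_mul map_mxM trmxCK.
have := orthomx_spectralP G_normal.
set P := spectralmx G; set e := spectral_diag G => GE.
have Pu : P \is unitarymx by apply: spectral_unitarymx.
have PP : P *m P^t* = 1%:M by apply/unitarymxP.
rewrite invmx_unitary // in GE.
exists P, e; split => // i.
have diagE : diag_mx e = (P *m B) *m (P *m B)^t*.
  rewrite trmx_mul map_mxM !mulmxA -(mulmxA P B) -/G GE !mulmxA PP mul1mx.
  by rewrite -!mulmxA PP mulmx1.
move/matrixP: diagE => /(_ i i); rewrite !mxE eqxx mulr1n => ->.
by apply: sumr_ge0 => j _; rewrite !mxE mul_conjC_ge0.
Qed.

Lemma contraction_defect k p (A : 'M[C]_(k, p)) P (e : 'rV[C]_k) :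
  P \is unitarymx -> A *m A^t* = P^t* *m diag_mx e *m P ->
  (forall i, 0 <= 1 - e 0 i) ->
  exists D : 'M[C]_k, A *m A^t* + D *m D^t* = 1%:M.
Proof.
move=> Pu AA e_le1; pose s := \row_i sqrtC (1 - e 0 i).
exists (P^t* *m diag_mx s).
have ss : diag_mx s *m (diag_mx s)^t* = 1%:M - diag_mx e.
  apply/matrixP => i j; rewrite tr_diag_mx map_diag_mx mul_diag_mx !mxE.
  case: (eqVneq i j) => [->|ne]; last by rewrite !mulr0n mulr0 subr0.
  by rewrite !mulr1n -normCK ger0_norm ?sqrtC_ge0 // sqrtCK.
rewrite trmx_mul map_mxM trmxCK !mulmxA -(mulmxA _ (diag_mx s)) ss AA.
rewrite -mulmxDl -mulmxDr addrC subrK mulmx1.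
have /unitarymxP : P^t* \is unitarymx by rewrite trmxC_unitary.
by rewrite trmxCK.
Qed.

Lemma scaled_contraction_defect k p (B : 'M[C]_(k, p)) :
  exists2 g : C, 0 < g &
    exists D : 'M[C]_k, (g *: B) *m (g *: B)^t* + D *m D^t* = 1%:M.
Proof.
have [P [e [Pu BB e_ge0]]] := gram_spectral B.
pose E := \sum_i e 0 i.
have e_leE i : e 0 i <= E by rewrite /E (bigD1 i) //= lerDl sumr_ge0.
have E1_gt0 : 0 < 1 + E by rewrite ltr_wpDr // sumr_ge0.
pose g := sqrtC (1 + E)^-1.
have g_gt0 : 0 < g by rewrite sqrtC_gt0 invr_gt0.
have g2 : g ^+ 2 = (1 + E)^-1 by rewrite sqrtCK.
exists g => //; apply: (contraction_defect Pu (e := g ^+ 2 *: e)).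
  have gBt : (g *: B)^t* = g *: B^t*.
    by apply/matrixP => i j; rewrite !mxE rmorphM /= (geC0_conj (ltW g_gt0)).
  rewrite gBt -scalemxAl -scalemxAr scalerA -expr2 BB.
  by rewrite [diag_mx (_ *: _)]linearZ /= -scalemxAr scalemxAl.
move=> i; rewrite mxE g2 subr_ge0 mulrC ler_pdivrMr // mul1r.
by rewrite (le_trans (e_leE i)) // lerDr.
Qed.

Lemma unitary_dilation k p n (B : 'M[C]_(k, p)) : (p + k <= n)%N ->
  exists2 g : C, 0 < g & exists2 M : 'M[C]_n, M \is unitarymx &
    forall (i j : 'I_n) (i' : 'I_k) (j' : 'I_p),
      i = i' :> nat -> j = j' :> nat -> M i j = g * B i' j'.
Proof.
move=> le_n; have [g g_gt0 [D gBD]] := scaled_contraction_defect B.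
have [M Mu MV] := unitarymx_corner (row_mx_unitarymx gBD) le_n.
exists g => //; exists M => // i j i' j' ii' jj'.
by rewrite (MV i j i' (lshift k j')) // row_mxEl mxE.
Qed.

End UnitaryDilation.

Definition clock_block (R : pzRingType) (NT : nat) (At gt : nat -> R) (r : R)
    (i j : nat) : R :=
  if (j <= NT)%N then
    if i == 0%N then At j else if j == i.-1 then 0 else - r * At j
  else gt i.

Theorem proposition2 (R : realType) (NT : nat) (hNT : (1 <= NT)%N)
  (At : nat -> R) (gt : nat -> R) (r : R) (hr : r != 0) :
  exists (gamma : R) (M : 'M[R[i]]_(clock_dim NT)),
    [/\ 0 < gamma,
        M \is unitarymx,
        (forall i j : 'I_(clock_dim NT), i = 0%N :> nat -> (j <= NT)%N ->
            M i j = (gamma * At j)%:C),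
        (forall (i j : 'I_(clock_dim NT)), (1 <= i <= NT.+1)%N -> (j <= NT)%N ->
            M i j = (if j == i.-1 :> nat then 0 else (- r * (gamma * At j))%:C))
      & (forall (i j : 'I_(clock_dim NT)), (i <= NT.+1)%N -> j = NT.+1 :> nat ->
            M i j = (gamma * gt i)%:C)].
Proof.
pose B : 'M[R[i]]_NT.+2 := \matrix_(i, j) (clock_block NT At gt r i j)%:C.
have le_n : (NT.+2 + NT.+2 <= clock_dim NT)%N by rewrite /clock_dim; lia.
have [g g_gt0 [M Mu MB]] := unitary_dilation B le_n.
have /complex_realP[gamma g_gamma] := gtr0_real g_gt0.
have M_block (i j : 'I_(clock_dim NT)) (ik : (i < NT.+2)%N) (jk : (j < NT.+2)%N) :
    M i j = (gamma * clock_block NT At gt r i j)%:C.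
  by rewrite (MB i j (Ordinal ik) (Ordinal jk)) // mxE g_gamma rmorphM.
exists gamma, M; split => //.
- by rewrite -ltcR -g_gamma.
- move=> i j i0 le_jNT; rewrite M_block; [|lia..].
  by rewrite /clock_block le_jNT i0.
- move=> i j /andP[i_ge1 i_le] le_jNT; rewrite M_block; [|lia..].
  rewrite /clock_block le_jNT eqn0Ngt i_ge1 /=.
  by case: ifP => _; rewrite ?mulr0 // mulrCA.
- move=> i j i_le jE; rewrite M_block; [|lia..].
  by rewrite /clock_block jE ltnn.
Qed.
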